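(* Let $\theta=(\mathrm{vec}(W),b^{(v)},b^{(h)})\in\mathbb{R}^d$ collect the parameters of a binary RBM, and consider the $\ell_2$-regularized Contrastive Divergence recursion $\theta_{t+1}=\theta_t+\eta(G_t-\Lambda\theta_t)$, where $G_t$ is the stochastic Contrastive Divergence gradient estimate at step $t$ and $\Lambda=\mathrm{diag}(\psi_W I,\psi_b I,\psi_b I)$ with $\psi_W>0$, $\psi_b>0$. Assume: (1) the minibatch size is finite; (2) visible units are binary; (3) hidden activations lie in $(0,1)$; (4) $0<\eta\psi_{\max}<2$, where $\psi_{\max}=\max(\psi_W,\psi_b)$. Then $\sup_{t\ge0}\|\theta_t\|_2<\infty$.
   Context: The CD gradient estimate $G_t$ consists of differences between minibatch data statistics and negative-phase (model) statistics: for the weights, averaged visible–hidden correlations $v h^\top$ (data minus model), and for the biases, averaged unit activations (data minus model), computed from binary visible vectors and hidden activations/samples in $[0,1]$ as in standard RBM training. $\|\cdot\|_2$ is the Euclidean norm on $\mathbb{R}^d$. The sampling temperature may be fixed or time-varying. *)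

From HB Require Import structures.
From mathcomp Require Import all_boot all_order all_algebra.
From mathcomp Require Export reals.
Set Implicit Arguments. Unset Strict Implicit. Unset Printing Implicit Defensive.
Import Order.TTheory GRing.Theory Num.Theory.
Local Open Scope ring_scope.

Section RBM.
Variable R : realType.
Variables nv nh : nat.

Definition rbm_dim := (nv * nh + nv + nh)%N.

Definition rbm_vec (W : 'M[R]_(nv, nh)) (bv : 'rV[R]_nv) (bh : 'rV[R]_nh)
  : 'rV[R]_rbm_dim := row_mx (row_mx (mxvec W) bv) bh.

Definition rbm_Lambda (psiW psib : R) : 'M[R]_rbm_dim :=
  diag_mx (row_mx (row_mx (const_mx psiW : 'rV[R]_(nv * nh))
                          (const_mx psib : 'rV[R]_nv))
                  (const_mx psib : 'rV[R]_nh)).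

Definition l2norm (n : nat) (x : 'rV[R]_n) : R :=
  Num.sqrt (\sum_(i < n) x 0 i ^+ 2).

(* CD gradient estimate: data statistics (minibatch of size B) minus
   negative-phase (model) statistics (M chains). *)
Definition cd_grad (B M : nat)
  (vd : 'I_B -> 'rV[R]_nv) (hd : 'I_B -> 'rV[R]_nh)
  (vm : 'I_M -> 'rV[R]_nv) (hm : 'I_M -> 'rV[R]_nh) : 'rV[R]_rbm_dim :=
  rbm_vec
    ((B%:R)^-1 *: \sum_(k < B) ((vd k)^T *m hd k)
       - (M%:R)^-1 *: \sum_(k < M) ((vm k)^T *m hm k))
    ((B%:R)^-1 *: \sum_(k < B) vd k - (M%:R)^-1 *: \sum_(k < M) vm k)
    ((B%:R)^-1 *: \sum_(k < B) hd k - (M%:R)^-1 *: \sum_(k < M) hm k).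

Definition binary_vec (n : nat) (v : 'rV[R]_n) : Prop :=
  forall i, v 0 i = 0 \/ v 0 i = 1.

Definition unit_vec (n : nat) (h : 'rV[R]_n) : Prop :=
  forall j, 0 <= h 0 j <= 1.

End RBM.

From HB Require Import structures.
From mathcomp Require Import all_boot all_order all_algebra.
From mathcomp Require Import reals.
From mathcomp Require Import ring lra.

Set Implicit Arguments.
Unset Strict Implicit.
Unset Printing Implicit Defensive.
Import Order.TTheory GRing.Theory Num.Theory.
Local Open Scope ring_scope.

(* Every coordinate of the CD gradient is a difference of two averages of
   numbers in [0, 1], hence has absolute value at most 1. Since Lambda is
   diagonal, each coordinate of theta then obeys the scalar recursion
   |x'| <= |1 - eta psi| |x| + eta with |1 - eta psi| < 1 because
   0 < eta psi < 2, so it stays below max(|x_0|, eta / (1 - |1 - eta psi|)).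
   Bounded coordinates give a bounded Euclidean norm. *)

Lemma row_mx_coordP (T : Type) (P : T -> Prop) (m n : nat)
    (a : 'rV[T]_m) (b : 'rV[T]_n) :
  (forall j, P (a 0 j)) -> (forall j, P (b 0 j)) ->
  forall k, P (row_mx a b 0 k).
Proof.
by move=> Pa Pb k; rewrite mxE; case: (split k).
Qed.

Lemma rbm_vec_coordP (R : realType) (nv nh : nat) (P : R -> Prop)
    (W : 'M[R]_(nv, nh)) (bv : 'rV[R]_nv) (bh : 'rV[R]_nh) :
  (forall i j, P (W i j)) -> (forall j, P (bv 0 j)) -> (forall j, P (bh 0 j)) ->
  forall k, P (rbm_vec W bv bh 0 k).
Proof.
move=> PW Pbv Pbh; apply: row_mx_coordP Pbh; apply: row_mx_coordP Pbv => k.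
by case/mxvec_indexP: k => i j; rewrite mxvecE.
Qed.

Lemma mul_rbm_LambdaE (R : realType) (nv nh : nat) (psiW psib : R)
    (x : 'rV[R]_(rbm_dim nv nh)) (i : 'I_(rbm_dim nv nh)) :
  (x *m rbm_Lambda nv nh psiW psib) 0 i = x 0 i * psiW \/
  (x *m rbm_Lambda nv nh psiW psib) 0 i = x 0 i * psib.
Proof.
rewrite mul_mx_diag mxE.
pose P psi := x 0 i * psi = x 0 i * psiW \/ x 0 i * psi = x 0 i * psib.
apply: (@row_mx_coordP _ P) => j; last by rewrite mxE; right.
by apply: (@row_mx_coordP _ P) => {}j; rewrite mxE; [left | right].
Qed.

Lemma mean_in01 (R : numFieldType) (n : nat) (F : 'I_n -> R) :
  (0 < n)%N -> (forall k, 0 <= F k <= 1) ->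
  0 <= n%:R^-1 * \sum_(k < n) F k <= 1.
Proof.
move=> n_gt0 F01.
have n_pos : (0 : R) < n%:R by rewrite ltr0n.
have sum_ge0 : 0 <= \sum_(k < n) F k.
  by apply: sumr_ge0 => k _; case/andP: (F01 k).
have sum_le_n : \sum_(k < n) F k <= n%:R.
  rewrite -[n in n%:R]card_ord -sumr_const.
  by apply: ler_sum => k _; case/andP: (F01 k).
apply/andP; split; first by rewrite mulr_ge0 // invr_ge0 ltW.
by rewrite ler_pdivrMl // mulr1.
Qed.

Lemma norm_sub_in01_le1 (R : realDomainType) (a b : R) :
  0 <= a <= 1 -> 0 <= b <= 1 -> `|a - b| <= 1.
Proof. by move=> /andP[? ?] /andP[? ?]; rewrite ler_norml; apply/andP; split; lra. Qed.

Lemma binary_vec_in01 (R : realType) (n : nat) (v : 'rV[R]_n) :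
  binary_vec v -> unit_vec v.
Proof. by move=> v01 j; case: (v01 j) => ->; rewrite ?lexx ?ler01. Qed.

Lemma cd_grad_coord_le1 (R : realType) (nv nh B M : nat)
    (vd : 'I_B -> 'rV[R]_nv) (hd : 'I_B -> 'rV[R]_nh)
    (vm : 'I_M -> 'rV[R]_nv) (hm : 'I_M -> 'rV[R]_nh) :
  (0 < B)%N -> (0 < M)%N ->
  (forall k, binary_vec (vd k)) -> (forall k, binary_vec (vm k)) ->
  (forall k, unit_vec (hd k)) -> (forall k, unit_vec (hm k)) ->
  forall i, `|cd_grad vd hd vm hm 0 i| <= 1.
Proof.
move=> B_gt0 M_gt0 vd01 vm01 hd01 hm01.
have outer_in01 (v : 'rV[R]_nv) (h : 'rV[R]_nh) i j :
    binary_vec v -> unit_vec h -> 0 <= (v^T *m h) i j <= 1.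
  move=> /binary_vec_in01 v01 h01; rewrite !mxE big_ord1 !mxE.
  case/andP: (v01 i) => ? ?; case/andP: (h01 j) => ? ?.
  by rewrite mulr_ge0 //= mulr_ile1.
apply: (@rbm_vec_coordP R nv nh (fun g => `|g| <= 1)) => [i j|j|j]; rewrite !mxE !summxE;
  apply: norm_sub_in01_le1; apply: mean_in01 => // k.
- exact: outer_in01.
- exact: outer_in01.
- exact: binary_vec_in01.
- exact: binary_vec_in01.
- exact: hd01.
- exact: hm01.
Qed.

Lemma contraction_factor_lt1 (R : realDomainType) (a : R) :
  0 < a < 2 -> `|1 - a| < 1.
Proof. by move=> /andP[? ?]; rewrite ltr_norml; apply/andP; split; lra. Qed.

Lemma regularized_step_norm_le (R : realDomainType) (eta psi x g : R) :
  0 <= eta -> `|g| <= 1 ->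
  `|x + eta * (g - x * psi)| <= `|1 - eta * psi| * `|x| + eta.
Proof.
move=> eta_ge0 g_le1.
have -> : x + eta * (g - x * psi) = (1 - eta * psi) * x + eta * g by ring.
apply: (le_trans (ler_normD _ _)); rewrite !normrM (ger0_norm eta_ge0).
by rewrite lerD2l -[leRHS]mulr1 ler_wpM2l.
Qed.

Lemma affine_recursion_bounded (R : realFieldType) (q c : R) (u : nat -> R) :
  0 <= q < 1 -> (forall t, u t.+1 <= q * u t + c) ->
  forall t, u t <= Num.max (u 0%N) (c / (1 - q)).
Proof.
move=> /andP[q_ge0 q_lt1] u_step; set K := Num.max _ _.
have c_le : c <= (1 - q) * K.
  by rewrite -ler_pdivrMl ?subr_gt0 // mulrC le_max lexx orbT.
elim=> [|t IH]; first by rewrite le_max lexx.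
apply: (le_trans (u_step t)).
have : q * u t <= q * K by rewrite ler_wpM2l.
lra.
Qed.

Lemma l2norm_le_sqrt_sum (R : realType) (n : nat) (x : 'rV[R]_n) (K : 'I_n -> R) :
  (forall i, `|x 0 i| <= K i) -> l2norm x <= Num.sqrt (\sum_i K i ^+ 2).
Proof.
move=> xK; apply: ler_wsqrtr; apply: ler_sum => i _.
rewrite -real_normK ?num_real // lerXn2r ?nnegrE //.
exact: le_trans (xK i).
Qed.

Theorem theorem4 (R : realType) (nv nh B M : nat) (psiW psib eta : R)
  (theta : nat -> 'rV[R]_(rbm_dim nv nh))
  (vd : nat -> 'I_B -> 'rV[R]_nv) (hd : nat -> 'I_B -> 'rV[R]_nh)
  (vm : nat -> 'I_M -> 'rV[R]_nv) (hm : nat -> 'I_M -> 'rV[R]_nh) :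
  (0 < B)%N -> (0 < M)%N ->
  0 < psiW -> 0 < psib ->
  0 < eta * Num.max psiW psib < 2 ->
  (forall t k, binary_vec (vd t k)) ->
  (forall t k, binary_vec (vm t k)) ->
  (forall t k, unit_vec (hd t k)) ->
  (forall t k, unit_vec (hm t k)) ->
  (forall t, theta t.+1 =
     theta t + eta *: (cd_grad (vd t) (hd t) (vm t) (hm t)
                       - theta t *m rbm_Lambda nv nh psiW psib)) ->
  exists C : R, forall t, l2norm (theta t) <= C.
Proof.
move=> B_gt0 M_gt0 psiW_gt0 psib_gt0 /andP[eta_max_gt0 eta_max_lt2]
  vd01 vm01 hd01 hm01 theta_rec.
have max_gt0 : 0 < Num.max psiW psib by rewrite lt_max psiW_gt0.
have eta_gt0 : 0 < eta by rewrite -(pmulr_lgt0 _ max_gt0).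
have factor_lt1 psi : 0 < psi -> psi <= Num.max psiW psib -> `|1 - eta * psi| < 1.
  move=> psi_gt0 psi_le; apply: contraction_factor_lt1.
  rewrite mulr_gt0 //=; apply: le_lt_trans eta_max_lt2.
  by rewrite ler_wpM2l // ltW.
set q := Num.max `|1 - eta * psiW| `|1 - eta * psib|.
have q01 : 0 <= q < 1.
  by rewrite le_max normr_ge0 gt_max !factor_lt1 // le_max lexx ?orbT.
have coord_step t i : `|theta t.+1 0 i| <= q * `|theta t 0 i| + eta.
  have G_le1 : `|cd_grad (vd t) (hd t) (vm t) (hm t) 0 i| <= 1.
    exact: cd_grad_coord_le1.
  rewrite theta_rec; move: (cd_grad _ _ _ _) G_le1 => G G_le1.
  have [Lam|Lam] := mul_rbm_LambdaE psiW psib (theta t) i;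
    move: (theta t *m _) Lam => y Lam; rewrite !mxE Lam;
    apply: (le_trans (regularized_step_norm_le _ _ (ltW eta_gt0) G_le1));
    by rewrite lerD2r ler_wpM2r // le_max lexx ?orbT.
exists (Num.sqrt (\sum_i Num.max `|theta 0%N 0 i| (eta / (1 - q)) ^+ 2)) => t.
apply: l2norm_le_sqrt_sum => i.
exact: (affine_recursion_bounded q01 (coord_step^~ i)).
Qed.
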